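(* Let $p>1$, $\beta=1/(p-1)$, $\gamma=\frac{p-2}{2(p-1)}$, $\sigma\in\{-1,1\}$, and $A>0$. Let $\phi\in C^2([A,\infty))$ be a solution of $$\sigma\phi''=\tfrac12 y\phi'-\gamma\phi-|\phi'|^p\quad\text{on }[A,\infty)$$ such that, for some $C>0$, $\phi'(y)\ge Cy^\beta$ for all $y\ge A$, and $|\phi''(y)|=o(y^{\beta+1})$ as $y\to\infty$. Then $$\lim_{y\to\infty}\frac{\phi(y)}{y^{\beta+1}}=L:=\frac{p^{-\beta}}{\beta+1}.$$ *)

From Stdlib Require Import Reals.
From Coquelicot Require Import Coquelicot.
Open Scope R_scope.

(* x^a for real a, with the convention 0^a = 0 (a > 0); Stdlib's Rpower 0 a = 1. *)
Definition rpow (x a : R) : R := if Req_EM_T x 0 then 0 else Rpower x a.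

From Stdlib Require Import Reals Lra Classical.
From Coquelicot Require Import Coquelicot.
Open Scope R_scope.

(* With [b = 1 / (p - 1)], put [g y = (b + 1) phi y / y ^ (b + 1)] and
   [h y = phi' y / y ^ b]. Then [y g' = (b + 1) (h - g)], and the equation becomes
   [- sigma phi'' / y ^ (b + 1) = h ^ p - h / 2 + (1 / 2 - 1 / p) g], which tends to [0].
   On the diagonal [h = g] the right-hand side vanishes only at [u = p ^ (- b)], and
   convexity of [w ^ p] keeps it away from [0] when [g >= u + e] and [h] is not well below
   [g], or when [g <= u - e] and [h] is close to [g]. So eventually [g] strictly decreases
   while above [u + e] and strictly increases while below [u - e], at a rate [d / y] whose
   integral diverges; hence [g -> u] and [phi / y ^ (b + 1) -> u / (b + 1)]. *)

Lemma Rpower_pos x a : 0 < Rpower x a.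
Proof. unfold Rpower; apply exp_pos. Qed.

Lemma Rpower_pred x a : 0 < x -> Rpower x a = x * Rpower x (a - 1).
Proof.
  intros Hx. replace a with (1 + (a - 1)) at 1 by ring.
  rewrite Rpower_plus, Rpower_1; auto.
Qed.

Lemma derivable_pt_lim_pos_local f x l : derivable_pt_lim f x l -> 0 < l ->
  exists r, 0 < r /\ (forall s, x - r < s < x -> f s < f x)
                  /\ (forall s, x < s < x + r -> f x < f s).
Proof.
  intros Hf Hl. destruct (Hf (l / 2) ltac:(lra)) as [r Hr].
  assert (Hsign : forall s, s <> x -> Rabs (s - x) < r -> 0 < (f s - f x) * (s - x)).
  { intros s Hs Hsr. assert (Hsx : s - x <> 0) by (intros E; apply Hs; lra).
    specialize (Hr (s - x) Hsx Hsr). replace (x + (s - x)) with s in Hr by ring.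
    apply Rabs_def2 in Hr.
    replace ((f s - f x) * (s - x)) with ((f s - f x) / (s - x) * ((s - x) * (s - x)))
      by (field; exact Hsx).
    apply Rmult_lt_0_compat; [lra | nra]. }
  pose proof (cond_pos r).
  exists r. split; [lra | split]; intros s Hs.
  - assert (0 < (f s - f x) * (s - x)) by (apply Hsign; [lra | rewrite Rabs_left; lra]). nra.
  - assert (0 < (f s - f x) * (s - x)) by (apply Hsign; [lra | rewrite Rabs_right; lra]). nra.
Qed.

Record relaxes (A c : R) (g h : R -> R) : Prop := {
  relaxes_A_pos : 0 < A;
  relaxes_rate_pos : 0 < c;
  relaxes_deriv : forall y, A < y -> derivable_pt_lim g y (c * (h y - g y) / y) }.

Lemma relaxes_opp {A c} {g h : R -> R} :
  relaxes A c g h -> relaxes A c (fun y => - g y) (fun y => - h y).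
Proof.
  intros [HA Hc Hd]. constructor; auto. intros y Hy.
  replace (c * (- h y - - g y) / y) with (- (c * (h y - g y) / y)) by (unfold Rdiv; ring).
  apply derivable_pt_lim_opp, Hd, Hy.
Qed.

Lemma relaxes_continuous {A c} {g h : R -> R} y :
  relaxes A c g h -> A < y -> continuity_pt g y.
Proof.
  intros Hg Hy. apply derivable_continuous_pt.
  exists (c * (h y - g y) / y). exact (relaxes_deriv _ _ _ _ Hg y Hy).
Qed.

Lemma relaxes_decreasing_local {A c} {g h : R -> R} y :
  relaxes A c g h -> A < y -> h y < g y ->
  exists r, 0 < r /\ (forall s, y - r < s < y -> g y < g s)
                  /\ (forall s, y < s < y + r -> g s < g y).
Proof.
  intros Hg Hy Hhg. pose proof (relaxes_A_pos _ _ _ _ Hg). pose proof (relaxes_rate_pos _ _ _ _ Hg).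
  destruct (derivable_pt_lim_pos_local (fun t => - g t) y (- (c * (h y - g y) / y)))
    as [r [Hr [Hleft Hright]]].
  - apply derivable_pt_lim_opp, (relaxes_deriv _ _ _ _ Hg y Hy).
  - assert (0 < c * (g y - h y) / y)
      by (apply Rdiv_lt_0_compat; [apply Rmult_lt_0_compat|]; lra).
    replace (- (c * (h y - g y) / y)) with (c * (g y - h y) / y) by (unfold Rdiv; ring). lra.
  - exists r. split; [exact Hr | split]; intros s Hs.
    + specialize (Hleft s Hs). lra.
    + specialize (Hright s Hs). lra.
Qed.

(* A point where [g] attains its maximum on [Y, t] and exceeds [M] would be one where
   [g] decreases. *)
Lemma relaxes_bounded_above {A c} {g h : R -> R} Y M :
  relaxes A c g h -> A < Y -> (forall t, Y <= t -> M <= g t -> h t < g t) ->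
  forall t, Y <= t -> g t <= Rmax (g Y) M.
Proof.
  intros Hg HY Hdown t Ht.
  destruct (continuity_ab_maj g Y t Ht) as [x [Hmax Hx]].
  { intros s Hs. apply (relaxes_continuous s Hg). lra. }
  destruct (Rle_or_lt (g t) (Rmax (g Y) M)) as [|Hgt]; [assumption | exfalso].
  pose proof (Rmax_l (g Y) M). pose proof (Rmax_r (g Y) M).
  assert (Hgx : g t <= g x) by (apply Hmax; lra).
  assert (HYx : Y < x) by (destruct (Req_dec x Y) as [->|]; lra).
  destruct (relaxes_decreasing_local x Hg ltac:(lra) (Hdown x ltac:(lra) ltac:(lra)))
    as [r [Hr [Hleft _]]].
  pose proof (Rmax_l Y (x - r / 2)). pose proof (Rmax_r Y (x - r / 2)).
  set (s := Rmax Y (x - r / 2)) in *.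
  assert (s < x) by (apply Rmax_lub_lt; lra).
  assert (g x < g s) by (apply Hleft; lra).
  assert (g s <= g x) by (apply Hmax; lra).
  lra.
Qed.

(* Take [z] minimising [g] on [t0, t1]: [h z < g z] would make [g] decrease after [z],
   [h z > g z] would make it increase before [z]. *)
Lemma relaxes_touch {A c} {g h : R -> R} t0 t1 :
  relaxes A c g h -> A < t0 <= t1 -> h t0 < g t0 -> g t1 <= h t1 ->
  exists z, t0 <= z <= t1 /\ g z <= g t0 /\ h z = g z.
Proof.
  intros Hg Ht Ht0 Ht1.
  destruct (continuity_ab_min g t0 t1) as [z [Hmin Hz]]; [lra | |].
  { intros s Hs. apply (relaxes_continuous s Hg). lra. }
  exists z. split; [exact Hz | split; [apply Hmin; lra |]].
  destruct (Rtotal_order (h z) (g z)) as [Hlt | [Heq | Hgt]]; [exfalso | exact Heq | exfalso].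
  - assert (z < t1) by (destruct (Req_dec z t1) as [->|]; lra).
    destruct (relaxes_decreasing_local z Hg ltac:(lra) Hlt) as [r [Hr [_ Hright]]].
    pose proof (Rmin_l t1 (z + r / 2)). pose proof (Rmin_r t1 (z + r / 2)).
    set (s := Rmin t1 (z + r / 2)) in *.
    assert (z < s) by (apply Rmin_glb_lt; lra).
    assert (g s < g z) by (apply Hright; lra).
    assert (g z <= g s) by (apply Hmin; lra).
    lra.
  - assert (t0 < z) by (destruct (Req_dec z t0) as [->|]; lra).
    destruct (relaxes_decreasing_local z (relaxes_opp Hg) ltac:(lra) ltac:(lra))
      as [r [Hr [Hleft _]]].
    pose proof (Rmax_l t0 (z - r / 2)). pose proof (Rmax_r t0 (z - r / 2)).
    set (s := Rmax t0 (z - r / 2)) in *.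
    assert (s < z) by (apply Rmax_lub_lt; lra).
    assert (- g z < - g s) by (apply Hleft; lra).
    assert (g z <= g s) by (apply Hmin; lra).
    lra.
Qed.

Lemma relaxes_log_growth {A c} {g h : R -> R} Y d :
  relaxes A c g h -> A < Y -> (forall t, Y <= t -> d <= h t - g t) ->
  forall t, Y <= t -> g Y + c * d * (ln t - ln Y) <= g t.
Proof.
  intros Hg HY Hgap t Ht. pose proof (relaxes_A_pos _ _ _ _ Hg). pose proof (relaxes_rate_pos _ _ _ _ Hg).
  destruct (Req_dec Y t) as [<- | Hne]; [lra |].
  destruct (MVT_cor2 (fun y => g y - c * d * ln y) (fun y => c * (h y - g y) / y - c * d * / y) Y t)
    as [x [Hx Hxt]]; [lra | |].
  - intros s Hs. apply derivable_pt_lim_minus.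
    + apply (relaxes_deriv _ _ _ _ Hg). lra.
    + apply derivable_pt_lim_scal, derivable_pt_lim_ln. lra.
  - assert (0 <= c * (h x - g x) / x - c * d * / x).
    { replace (c * (h x - g x) / x - c * d * / x) with (c * (h x - g x - d) / x) by (field; lra).
      assert (d <= h x - g x) by (apply Hgap; lra).
      apply Rdiv_le_0_compat; [apply Rmult_le_pos|]; lra. }
    assert (0 <= (c * (h x - g x) / x - c * d * / x) * (t - Y)) by (apply Rmult_le_pos; lra).
    lra.
Qed.

Lemma relaxes_unbounded {A c} {g h : R -> R} Y d :
  relaxes A c g h -> A < Y -> 0 < d -> (forall t, Y <= t -> d <= h t - g t) ->
  forall M, exists t, Y <= t /\ M < g t.
Proof.
  intros Hg HY Hd Hgap M. pose proof (relaxes_A_pos _ _ _ _ Hg). pose proof (relaxes_rate_pos _ _ _ _ Hg).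
  assert (Hcd : 0 < c * d) by (apply Rmult_lt_0_compat; lra).
  set (x := Rabs (M - g Y) / (c * d) + 1).
  assert (Hx : c * d * x = Rabs (M - g Y) + c * d) by (unfold x; field; lra).
  assert (Hx0 : 0 < x) by (unfold x; pose proof (Rabs_pos (M - g Y));
    assert (0 <= Rabs (M - g Y) / (c * d)) by (apply Rdiv_le_0_compat; lra); lra).
  assert (1 < exp x) by (rewrite <- exp_0; apply exp_increasing; lra).
  assert (HYt : Y <= Y * exp x) by nra.
  exists (Y * exp x). split; [exact HYt |].
  pose proof (relaxes_log_growth Y d Hg HY Hgap _ HYt) as Hgrow.
  rewrite ln_mult, ln_exp in Hgrow by (try lra; apply exp_pos).
  pose proof (Rle_abs (M - g Y)). lra.
Qed.

Lemma relaxes_eventually_ge {A c} {g h : R -> R} Y m d :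
  relaxes A c g h -> A < Y -> 0 < d -> (forall t, Y <= t -> g t <= m -> d <= h t - g t) ->
  exists Y', A < Y' /\ forall t, Y' <= t -> m <= g t.
Proof.
  intros Hg HY Hd Hup.
  destruct (classic (exists t0, Y <= t0 /\ m <= g t0)) as [[t0 [Ht0 Hm]] | Hnever].
  - exists t0. split; [lra |]. intros t Ht.
    assert (Hbound : - g t <= Rmax (- g t0) (- m)).
    { apply (relaxes_bounded_above t0 (- m) (relaxes_opp Hg)); [lra | | exact Ht].
      intros s Hs Hgs. assert (d <= h s - g s) by (apply Hup; lra). lra. }
    rewrite Rmax_right in Hbound by lra. lra.
  - exfalso.
    assert (Hlow : forall t, Y <= t -> g t < m).
    { intros t Ht. destruct (Rlt_or_le (g t) m) as [|Hge]; [assumption |].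
      exfalso. apply Hnever. exists t. split; assumption. }
    destruct (relaxes_unbounded Y d Hg HY Hd) with (M := m) as [t [Ht Hmt]].
    + intros t Ht. apply Hup; [exact Ht | left; apply Hlow, Ht].
    + specialize (Hlow t Ht). lra.
Qed.

Lemma relaxes_eventually_le {A c} {g h : R -> R} Y m d :
  relaxes A c g h -> A < Y -> 0 < d -> (forall t, Y <= t -> m <= g t -> d <= g t - h t) ->
  exists Y', A < Y' /\ forall t, Y' <= t -> g t <= m.
Proof.
  intros Hg HY Hd Hdown.
  destruct (relaxes_eventually_ge Y (- m) d (relaxes_opp Hg) HY Hd) as [Y' [HY' Hge]].
  - intros t Ht Hm. assert (d <= g t - h t) by (apply Hdown; lra). lra.
  - exists Y'. split; [exact HY' |]. intros t Ht. specialize (Hge t Ht). lra.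
Qed.

(* Once [h < g] at a low point, [h - g] cannot reach [0] without passing through the
   gap, so [g] keeps decreasing at a logarithmic rate and breaks the lower bound [a]. *)
Lemma relaxes_rises_when_low {A c} {g h : R -> R} Y a m d :
  relaxes A c g h -> A < Y -> 0 < d ->
  (forall t, Y <= t -> a <= g t) ->
  (forall t, Y <= t -> g t <= m -> d <= Rabs (h t - g t)) ->
  forall t, Y <= t -> g t <= m -> d <= h t - g t.
Proof.
  intros Hg HY Hd Hlow Hgap t0 Ht0 Hm0.
  pose proof (Hgap t0 Ht0 Hm0) as Hgap0.
  destruct (Rle_or_lt 0 (h t0 - g t0)) as [Hnn | Hneg].
  { rewrite Rabs_right in Hgap0 by lra. exact Hgap0. }
  exfalso.
  assert (Hbelow : forall t, t0 <= t -> h t < g t).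
  { intros t1 Ht1. destruct (Rlt_or_le (h t1) (g t1)) as [|Hge]; [assumption | exfalso].
    destruct (relaxes_touch t0 t1 Hg ltac:(lra) ltac:(lra) Hge) as [z [Hz [Hgz Hhz]]].
    pose proof (Hgap z ltac:(lra) ltac:(lra)) as Hgapz.
    rewrite Hhz, Rminus_diag, Rabs_R0 in Hgapz. lra. }
  assert (Hdecr : forall t, t0 <= t -> g t <= g t0).
  { intros t Ht. rewrite <- (Rmax_left (g t0) (g t0)) by lra.
    apply (relaxes_bounded_above t0 (g t0) Hg); [lra | | exact Ht].
    intros s Hs _. apply Hbelow, Hs. }
  destruct (relaxes_unbounded t0 d (relaxes_opp Hg) ltac:(lra) Hd) with (M := - a)
    as [t [Ht Hta]].
  - intros t Ht. pose proof (Hgap t ltac:(lra) ltac:(pose proof (Hdecr t Ht); lra)) as Hgapt.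
    pose proof (Hbelow t Ht). rewrite Rabs_left in Hgapt by lra. lra.
  - pose proof (Hlow t ltac:(lra)). lra.
Qed.

Lemma relaxes_cvg {A c} {g h : R -> R} C u :
  relaxes A c g h -> 0 < C -> (forall y, A < y -> C <= h y) ->
  (forall e, 0 < e -> exists d Y, 0 < d /\
     forall y, Y < y -> u + e <= g y -> h y <= g y - d) ->
  (forall e a, 0 < e < u -> 0 < a -> exists d Y, 0 < d /\
     forall y, Y < y -> a <= g y <= u - e -> d <= Rabs (h y - g y)) ->
  forall e, 0 < e < u -> exists Y, forall y, Y < y -> Rabs (g y - u) <= e.
Proof.
  intros Hg HC HhC Habove Hapart e He. pose proof (relaxes_A_pos _ _ _ _ Hg).
  destruct (relaxes_eventually_ge (A + 1) (C / 2) (C / 2) Hg ltac:(lra) ltac:(lra))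
    as [Y1 [HY1 Hlow]].
  { intros t Ht Hgt. assert (C <= h t) by (apply HhC; lra). lra. }
  destruct (Habove e ltac:(lra)) as [d1 [Yu [Hd1 Hu]]].
  pose proof (Rmax_r Yu A).
  destruct (relaxes_eventually_le (Rmax Yu A + 1) (u + e) d1 Hg ltac:(lra) Hd1)
    as [Y2 [HY2 Hup]].
  { intros t Ht Ht'. pose proof (Rmax_l Yu A).
    assert (h t <= g t - d1) by (apply Hu; lra). lra. }
  destruct (Hapart e (C / 2) He ltac:(lra)) as [d2 [Yl [Hd2 Hl]]].
  pose proof (Rmax_l Y1 Yl). pose proof (Rmax_r Y1 Yl).
  set (Y3 := Rmax Y1 Yl + 1) in *.
  assert (HY3 : A < Y3) by (unfold Y3; lra).
  destruct (relaxes_eventually_ge Y3 (u - e) d2 Hg HY3 Hd2) as [Y4 [HY4 Hlo]].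
  { apply (relaxes_rises_when_low Y3 (C / 2) (u - e) d2 Hg HY3 Hd2).
    - intros t Ht. apply Hlow. unfold Y3 in Ht; lra.
    - intros t Ht Hm. apply Hl; [unfold Y3 in Ht; lra |].
      split; [apply Hlow; unfold Y3 in Ht; lra | exact Hm]. }
  exists (Rmax Y2 Y4). intros y Hy. pose proof (Rmax_l Y2 Y4). pose proof (Rmax_r Y2 Y4).
  assert (g y <= u + e) by (apply Hup; lra). assert (u - e <= g y) by (apply Hlo; lra).
  apply Rabs_le; lra.
Qed.

Lemma Rpower_tangent_le p w x : 1 < p -> 0 < w -> 0 < x ->
  Rpower x p + p * Rpower x (p - 1) * (w - x) <= Rpower w p.
Proof.
  intros Hp Hw Hx.
  set (k := fun t => Rpower t p - p * Rpower x (p - 1) * t).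
  set (k' := fun t => p * Rpower t (p - 1) - p * Rpower x (p - 1)).
  assert (Hk : forall t, 0 < t -> derivable_pt_lim k t (k' t)).
  { intros t Ht. apply derivable_pt_lim_minus; [apply derivable_pt_lim_power, Ht |].
    replace (p * Rpower x (p - 1)) with (p * Rpower x (p - 1) * 1) at 2 by ring.
    apply derivable_pt_lim_scal, derivable_pt_lim_id. }
  destruct (Rtotal_order w x) as [Hlt | [-> | Hgt]]; [| lra |].
  - destruct (MVT_cor2 k k' w x Hlt) as [z [Hz Hzx]]; [intros t Ht; apply Hk; lra |].
    assert (Rpower z (p - 1) <= Rpower x (p - 1)) by (apply Rle_Rpower_l; lra).
    assert (k' z <= 0) by (unfold k'; nra).
    assert (k' z * (x - w) <= 0) by nra.
    unfold k in Hz. nra.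
  - destruct (MVT_cor2 k k' x w Hgt) as [z [Hz Hzx]]; [intros t Ht; apply Hk; lra |].
    assert (Rpower x (p - 1) <= Rpower z (p - 1)) by (apply Rle_Rpower_l; lra).
    assert (0 <= k' z) by (unfold k'; nra).
    assert (0 <= k' z * (w - x)) by nra.
    unfold k in Hz. nra.
Qed.

(* In the scaled variables [g], [h] the equation reads
   [- sigma phi'' / y ^ (b + 1) = residual p (h y) (g y)]. *)
Definition residual (p w x : R) : R := Rpower w p - w / 2 + (/ 2 - / p) * x.

Lemma residual_ge p w x : 1 < p -> 0 < w -> 0 < x ->
  x * (Rpower x (p - 1) - / p) + (w - x) * (p * Rpower x (p - 1) - / 2) <= residual p w x.
Proof.
  intros Hp Hw Hx. pose proof (Rpower_tangent_le p w x Hp Hw Hx) as T.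
  rewrite (Rpower_pred x p Hx) in T. unfold residual. lra.
Qed.

Lemma residual_le p w x : 1 < p -> 0 < w -> 0 < x ->
  residual p w x <= x * (Rpower x (p - 1) - / p) + (w - x) * (p * Rpower w (p - 1) - / 2).
Proof.
  intros Hp Hw Hx. pose proof (Rpower_tangent_le p x w Hp Hx Hw) as T.
  rewrite (Rpower_pred x p Hx), (Rpower_pred w p Hw) in T.
  unfold residual. rewrite (Rpower_pred w p Hw). lra.
Qed.

Lemma residual_pos_above p u e : 1 < p -> 0 < u -> Rpower u (p - 1) = / p -> 0 < e ->
  exists d eta, 0 < d /\ 0 < eta /\
    forall x w, u + e <= x -> 0 < w -> x - d < w -> eta <= residual p w x.
Proof.
  intros Hp Hu Hup He.
  set (X := u + e). set (s1 := Rpower X (p - 1)).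
  assert (HX : 0 < X) by (unfold X; lra).
  assert (Hs1 : / p < s1) by (rewrite <- Hup; apply Rlt_Rpower_l; unfold X; lra).
  assert (Hip : 0 < / p) by (apply Rinv_0_lt_compat; lra).
  set (m := X * (s1 - / p)).
  assert (Hm : 0 < m) by (unfold m; nra).
  set (d := Rmin (X / (2 * p)) (m / 4)).
  assert (Hdm : d <= m / 4) by apply Rmin_r.
  assert (Hdp : d * p <= X / 2).
  { replace (X / 2) with (X / (2 * p) * p) by (field; lra).
    apply Rmult_le_compat_r; [lra | apply Rmin_l]. }
  assert (Hd : 0 < d).
  { apply Rmin_glb_lt; [apply Rdiv_lt_0_compat; lra | lra]. }
  exists d, (m / 4). split; [exact Hd | split; [lra |]].
  intros x w Hx Hw Hxw. assert (Hx0 : 0 < x) by lra.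
  pose proof (residual_ge p w x Hp Hw Hx0) as R.
  set (s := Rpower x (p - 1)) in *.
  assert (Hs : s1 <= s) by (apply Rle_Rpower_l; lra).
  assert (Hps : 1 < p * s) by (replace 1 with (p * / p) by (field; lra); nra).
  assert (Hlow : m <= x * (s - / p)) by (unfold m; apply Rmult_le_compat; lra).
  destruct (Rle_or_lt x w) as [Hxw' | Hwx].
  - assert (0 <= (w - x) * (p * s - / 2)) by (apply Rmult_le_pos; lra). lra.
  - assert ((w - x) * (p * s - / 2) >= - d * (p * s)) by nra.
    assert (m / 2 <= (x - d * p) * (s - / p)).
    { replace (m / 2) with (X / 2 * (s1 - / p)) by (unfold m; field; lra).
      apply Rmult_le_compat; lra. }
    assert (x * (s - / p) - d * (p * s) = (x - d * p) * (s - / p) - d) by (field; lra).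
    lra.
Qed.

Lemma residual_neg_near_diag p u e a :
  1 < p -> 0 < u -> Rpower u (p - 1) = / p -> 0 < e < u -> 0 < a ->
  exists d eta, 0 < d /\ 0 < eta /\
    forall x w, a <= x <= u - e -> 0 < w -> Rabs (w - x) < d -> residual p w x <= - eta.
Proof.
  intros Hp Hu Hup He Ha.
  set (s2 := Rpower (u - e) (p - 1)).
  assert (Hs2 : s2 < / p) by (rewrite <- Hup; apply Rlt_Rpower_l; lra).
  set (m := a * (/ p - s2)).
  assert (Hm : 0 < m) by (unfold m; nra).
  set (d := Rmin e (m / 3)).
  assert (Hde : d <= e) by apply Rmin_l.
  assert (Hdm : d <= m / 3) by apply Rmin_r.
  assert (Hd : 0 < d) by (apply Rmin_glb_lt; lra).
  exists d, (m / 2). split; [exact Hd | split; [lra |]].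
  intros x w Hx Hw Hwx. apply Rabs_def2 in Hwx.
  pose proof (residual_le p w x Hp Hw ltac:(lra)) as R.
  set (s := Rpower x (p - 1)) in *. set (t := Rpower w (p - 1)) in *.
  assert (Hs : s <= s2) by (apply Rle_Rpower_l; lra).
  assert (Ht : t <= / p) by (rewrite <- Hup; apply Rle_Rpower_l; lra).
  assert (Ht0 : 0 < t) by apply Rpower_pos.
  assert (Hpt : 0 < p * t <= 1).
  { split; [nra |]. replace 1 with (p * / p) by (field; lra). apply Rmult_le_compat_l; lra. }
  assert (Hnear : (w - x) * (p * t - / 2) <= d / 2) by nra.
  assert (Hfar : x * (s - / p) <= - m) by (unfold m; nra).
  lra.
Qed.

Lemma Rpower_root_inv p : 1 < p -> Rpower (Rpower p (- / (p - 1))) (p - 1) = / p.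
Proof.
  intros Hp. rewrite Rpower_mult.
  replace (- / (p - 1) * (p - 1)) with (- (1)) by (field; lra).
  rewrite Rpower_Ropp, Rpower_1; lra.
Qed.

Section ScaledProfile.

Variables (p sigma A C : R) (phi phi1 phi2 : R -> R).
Hypothesis Hp : 1 < p.
Hypothesis Hsigma : sigma = -1 \/ sigma = 1.
Hypothesis HA : 0 < A.
Hypothesis HC : 0 < C.
Hypothesis Dphi : forall y, A < y -> is_derive phi y (phi1 y).
Hypothesis Hode : forall y, A < y ->
  sigma * phi2 y = / 2 * y * phi1 y - (p - 2) / (2 * (p - 1)) * phi y
                   - rpow (Rabs (phi1 y)) p.
Hypothesis Hslope : forall y, A < y -> C * Rpower y (/ (p - 1)) <= phi1 y.
Hypothesis Hphi2 : is_lim (fun y => Rabs (phi2 y) / Rpower y (/ (p - 1) + 1)) p_infty 0.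

Let b := / (p - 1).
Let g y := (b + 1) * phi y / Rpower y (b + 1).
Let h y := phi1 y / Rpower y b.

Let b_pos : 0 < b.
Proof. apply Rinv_0_lt_compat; lra. Qed.

Let Rpower_succ y : 0 < y -> Rpower y (b + 1) = y * Rpower y b.
Proof. intros Hy. rewrite Rpower_plus, Rpower_1 by exact Hy. ring. Qed.

Lemma scaled_slope_ge y : A < y -> C <= h y.
Proof.
  intros Hy. unfold h. apply Rle_div_r; [exact (Rpower_pos y b) | exact (Hslope y Hy)].
Qed.

Lemma scaled_relaxes : relaxes A (b + 1) g h.
Proof.
  constructor; [exact HA | lra |]. intros y Hy.
  pose proof (Rpower_pos y b). pose proof (Rpower_pos y (b + 1)).
  pose proof (derivable_pt_lim_div (fun t => (b + 1) * phi t) (fun t => Rpower t (b + 1)) y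
    _ _ (derivable_pt_lim_scal _ _ _ _ (proj1 (is_derive_Reals _ _ _) (Dphi y Hy)))
    (derivable_pt_lim_power y (b + 1) ltac:(lra)) ltac:(lra)) as D.
  replace ((b + 1) * (h y - g y) / y) with
    (((b + 1) * phi1 y * Rpower y (b + 1)
      - (b + 1) * Rpower y (b + 1 - 1) * ((b + 1) * phi y)) / (Rpower y (b + 1))²);
    [exact D |].
  unfold g, h. replace (b + 1 - 1) with b by ring.
  rewrite (Rpower_succ y) by lra. unfold Rsqr. field. lra.
Qed.

Lemma phi1_pos y : A < y -> 0 < phi1 y.
Proof.
  intros Hy. pose proof (Rpower_pos y b). pose proof (Hslope y Hy) as Hs.
  change (/ (p - 1)) with b in Hs. nra.
Qed.

Lemma rpow_scaled_slope y : A < y -> rpow (Rabs (phi1 y)) p = Rpower (h y) p * Rpower y (b + 1).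
Proof.
  intros Hy. pose proof (phi1_pos y Hy). pose proof (Rpower_pos y b).
  unfold rpow. rewrite Rabs_right by lra.
  destruct (Req_EM_T (phi1 y) 0) as [E | _]; [lra |].
  replace (Rpower y (b + 1)) with (Rpower (Rpower y b) p)
    by (rewrite Rpower_mult; f_equal; unfold b; field; lra).
  rewrite Rpower_mult_distr by (try apply Rdiv_lt_0_compat; lra).
  unfold h. f_equal. field. lra.
Qed.

Lemma residual_scaled y : A < y ->
  residual p (h y) (g y) = - sigma * phi2 y / Rpower y (b + 1).
Proof.
  intros Hy. pose proof (Rpower_pos y b). pose proof (Hode y Hy) as E.
  rewrite rpow_scaled_slope in E by exact Hy.
  replace ((p - 2) / (2 * (p - 1))) with ((/ 2 - / p) * (b + 1)) in E by (unfold b; field; lra).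
  unfold residual, g, h in *. rewrite (Rpower_succ y) in * by lra.
  replace (- sigma * phi2 y) with (- (sigma * phi2 y)) by ring.
  rewrite E. field. lra.
Qed.

Lemma residual_scaled_small eta : 0 < eta ->
  exists Y, forall y, Y < y -> Rabs (residual p (h y) (g y)) < eta.
Proof.
  intros Heta. apply is_lim_spec in Hphi2.
  destruct (Hphi2 (mkposreal eta Heta)) as [Y HY]. exists (Rmax Y A). intros y Hy.
  pose proof (Rmax_l Y A). pose proof (Rmax_r Y A).
  specialize (HY y ltac:(lra)). simpl in HY. rewrite Rminus_0_r in HY.
  pose proof (Rpower_pos y (b + 1)) as Hpow.
  assert (Hsig : Rabs sigma = 1)
    by (destruct Hsigma as [-> | ->]; [rewrite Rabs_left by lra; lra | apply Rabs_R1]).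
  rewrite residual_scaled by lra.
  replace (Rabs (- sigma * phi2 y / Rpower y (b + 1))) with (Rabs (phi2 y) / Rpower y (b + 1)).
  - rewrite Rabs_right in HY; [exact HY |].
    apply Rle_ge, Rdiv_le_0_compat; [apply Rabs_pos | exact Hpow].
  - unfold Rdiv. rewrite !Rabs_mult, Rabs_Ropp, Hsig, Rabs_inv, (Rabs_right (Rpower _ _)) by lra.
    ring.
Qed.

Lemma scaled_cvg : is_lim g p_infty (Rpower p (- b)).
Proof.
  set (u := Rpower p (- b)).
  assert (Hu : 0 < u) by apply Rpower_pos.
  assert (Hup : Rpower u (p - 1) = / p) by exact (Rpower_root_inv p Hp).
  assert (Habove : forall e, 0 < e -> exists d Y, 0 < d /\
            forall y, Y < y -> u + e <= g y -> h y <= g y - d).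
  { intros e He. destruct (residual_pos_above p u e Hp Hu Hup He) as [d [eta [Hd [Heta Hres]]]].
    destruct (residual_scaled_small eta Heta) as [Y HY].
    exists d, (Rmax Y A). split; [exact Hd |]. intros y Hy Hgy.
    pose proof (Rmax_l Y A). pose proof (Rmax_r Y A).
    destruct (Rle_or_lt (h y) (g y - d)) as [|Hlt]; [assumption | exfalso].
    pose proof (scaled_slope_ge y ltac:(lra)).
    pose proof (Hres (g y) (h y) Hgy ltac:(lra) ltac:(lra)).
    pose proof (HY y ltac:(lra)) as Hsmall. apply Rabs_def2 in Hsmall. lra. }
  assert (Hapart : forall e a, 0 < e < u -> 0 < a -> exists d Y, 0 < d /\
            forall y, Y < y -> a <= g y <= u - e -> d <= Rabs (h y - g y)).
  { intros e a He Ha.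
    destruct (residual_neg_near_diag p u e a Hp Hu Hup He Ha) as [d [eta [Hd [Heta Hres]]]].
    destruct (residual_scaled_small eta Heta) as [Y HY].
    exists d, (Rmax Y A). split; [exact Hd |]. intros y Hy Hgy.
    pose proof (Rmax_l Y A). pose proof (Rmax_r Y A).
    destruct (Rle_or_lt d (Rabs (h y - g y))) as [|Hlt]; [assumption | exfalso].
    pose proof (scaled_slope_ge y ltac:(lra)).
    pose proof (Hres (g y) (h y) Hgy ltac:(lra) Hlt).
    pose proof (HY y ltac:(lra)) as Hsmall. apply Rabs_def2 in Hsmall. lra. }
  pose proof (relaxes_cvg C u scaled_relaxes HC scaled_slope_ge Habove Hapart) as Hcvg.
  apply is_lim_spec. intros eps. pose proof (cond_pos eps).
  destruct (Hcvg (Rmin (eps / 2) (u / 2))) as [Y HY].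
  { split; [apply Rmin_glb_lt; lra |]. pose proof (Rmin_r (eps / 2) (u / 2)). lra. }
  exists Y. intros y Hy. pose proof (HY y Hy). pose proof (Rmin_l (eps / 2) (u / 2)). lra.
Qed.

Lemma profile_cvg :
  is_lim (fun y => phi y / Rpower y (b + 1)) p_infty (Rpower p (- b) / (b + 1)).
Proof.
  replace (Finite (Rpower p (- b) / (b + 1))) with (Rbar_mult (/ (b + 1)) (Rpower p (- b)))
    by (simpl; f_equal; field; lra).
  apply (is_lim_ext (fun y => / (b + 1) * g y)).
  - intros y. unfold g. field. split; [apply Rgt_not_eq, Rpower_pos | lra].
  - apply is_lim_scal_l, scaled_cvg.
Qed.

End ScaledProfile.

Theorem lemma7p5 (p sigma A C : R) (phi phi1 phi2 : R -> R) :
  1 < p ->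
  (sigma = -1 \/ sigma = 1) ->
  0 < A ->
  0 < C ->
  (forall y, A < y -> is_derive phi y (phi1 y)) ->
  (forall y, A < y -> is_derive phi1 y (phi2 y)) ->
  (forall y, A < y -> continuous phi2 y) ->
  (forall y, A < y ->
     sigma * phi2 y = / 2 * y * phi1 y - (p - 2) / (2 * (p - 1)) * phi y
                      - rpow (Rabs (phi1 y)) p) ->
  (forall y, A < y -> C * Rpower y (/ (p - 1)) <= phi1 y) ->
  is_lim (fun y => Rabs (phi2 y) / Rpower y (/ (p - 1) + 1)) p_infty 0 ->
  is_lim (fun y => phi y / Rpower y (/ (p - 1) + 1)) p_infty
         (Rpower p (- / (p - 1)) / (/ (p - 1) + 1)).
Proof.
  intros Hp Hsigma HA HC Dphi _ _ Hode Hslope Hphi2.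
  exact (profile_cvg p sigma A C phi phi1 phi2 Hp Hsigma HA HC Dphi Hode Hslope Hphi2).
Qed.
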